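(* Let $mG$ be a finite canonical misinformation game, $\Gamma=(\mathcal{AD}^*(\{mG\}),E)$ its adaptation graph, and $\Gamma'$ the graph obtained from $\Gamma$ by omitting self-loops. Let $mG'$ be the last node on a maximal path in $\Gamma'$ starting from $mG$. Then every natural misinformed equilibrium of $mG'$ is a stable misinformed equilibrium of $mG$.
   Context: A normal-form game is $G=\langle N,S,P\rangle$ with finite players $N$, finite pure strategy sets $S_i$, positions $S=\times_i S_i$, payoffs $P_i:S\to\mathbb{R}$. A misinformation game $mG=\langle G^0,G^1,\dots,G^{|N|}\rangle$ consists of the actual game $G^0$ and subjective games $G^i$; it is canonical if all $G^i=\langle N,S,P^i\rangle$ differ from $G^0$ only in payoffs and in every $G^i$ all players have equally many pure strategies. $NME(mG)$ (natural misinformed equilibria) is the set of profiles $\sigma=(\sigma_1,\dots,\sigma_{|N|})$ such that each $\sigma_i$ is player $i$'s component of some Nash equilibrium of $G^i$. $\chi(\sigma)=\mathrm{supp}(\sigma_1)\times\dots\times\mathrm{supp}(\sigma_{|N|})$. For $\vec v\in S$, $mG_{\vec v}$ is obtained by replacing, in every $P^i$ ($i\ge1$), the payoff vector at position $\vec v$ by $P^0(\vec v)$. For a set $M$ of misinformation games, $\mathcal{AD}(M)=\{mG_{\vec u}: mG\in M,\sigma\in NME(mG),\vec u\in\chi(\sigma)\}$, $\mathcal{AD}^{(0)}(M)=M$, $\mathcal{AD}^{(t+1)}(M)=\mathcal{AD}^{(t)}(\mathcal{AD}(M))$, $\mathcal{AD}^*(M)=\bigcup_{t\ge0}\mathcal{AD}^{(t)}(M)$;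 the length $\mathfrak{L}$ is the least $t\ge0$ with $\mathcal{AD}^{(t+1)}(M)=\mathcal{AD}^{(t)}(M)$ and $\mathcal{AD}^\infty(M)=\mathcal{AD}^{(\mathfrak{L})}(M)$. A profile $\sigma$ is a stable misinformed equilibrium of $mG$ if there is $\widehat{mG}\in\mathcal{AD}^\infty(\{mG\})$ with $\sigma\in NME(\widehat{mG})$ and $\widehat{mG}_{\vec v}=\widehat{mG}$ for all $\vec v\in\chi(\sigma)$. The adaptation graph $\Gamma$ has vertex set $\mathcal{AD}^*(\{mG\})$ and an edge $(mG^1,mG^2)$ iff $mG^2=(mG^1)_{\vec v}$ for some $\sigma\in NME(mG^1)$, $\vec v\in\chi(\sigma)$. A maximal path is a directed path that cannot be extended. *)

From HB Require Import structures.
From mathcomp Require Import all_boot all_order all_algebra.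
Set Implicit Arguments. Unset Strict Implicit. Unset Printing Implicit Defensive.
Import Order.TTheory GRing.Theory Num.Theory.
Local Open Scope ring_scope.

(* All games of a
   canonical misinformation game share the players and the strategy sets, so
   these are parameters; only the payoffs vary. *)
Section MisinfGames.
Variables (R : realFieldType) (n : nat) (m : 'I_n -> nat).

Definition position := {dffun forall i : 'I_n, 'I_(m i)}.

Definition payoff := position -> 'I_n -> R.

Record mgame := MGame {
  actual : payoff;
  subj : 'I_n -> payoff       (* subj i = P^{i} (player i's subjective game) *)
}.

Definition mixed (i : 'I_n) (x : 'I_(m i) -> R) : Prop :=
  (forall a, 0 <= x a) /\ \sum_(a < m i) x a = 1.

Definition profile := forall i : 'I_n, 'I_(m i) -> R.

Definition expected (P : payoff) (sigma : profile) (j : 'I_n) : R :=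
  \sum_(s : position) (\prod_(i < n) sigma i (s i)) * P s j.

Definition nash (P : payoff) (sigma : profile) : Prop :=
  (forall i, mixed (sigma i)) /\
  forall (j : 'I_n) (tau : 'I_(m j) -> R), mixed tau ->
    expected P (dfwith sigma tau) j <= expected P sigma j.

Definition NME (mG : mgame) (sigma : profile) : Prop :=
  forall i : 'I_n, exists tau : profile, nash (subj mG i) tau /\ tau i = sigma i.

Definition chi (sigma : profile) (v : position) : Prop :=
  forall i : 'I_n, 0 < sigma i (v i).

Definition adapt (mG : mgame) (v : position) : mgame :=
  MGame (actual mG) (fun i s => if s == v then actual mG v else subj mG i s).

Definition mset := mgame -> Prop.
Definition mset_eq (M1 M2 : mset) : Prop := forall g, M1 g <-> M2 g.

Definition adapt_edge (g1 g2 : mgame) : Prop :=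
  exists (sigma : profile) (v : position), NME g1 sigma /\ chi sigma v /\ g2 = adapt g1 v.

Definition AD (M : mset) : mset := fun g => exists g0, M g0 /\ adapt_edge g0 g.

Fixpoint ADiter (t : nat) (M : mset) : mset :=
  match t with 0 => M | t'.+1 => ADiter t' (AD M) end.

Definition ADstar (M : mset) : mset := fun g => exists t, ADiter t M g.

Definition is_length (M : mset) (t : nat) : Prop :=
  mset_eq (ADiter t.+1 M) (ADiter t M) /\
  forall t', (t' < t)%N -> ~ mset_eq (ADiter t'.+1 M) (ADiter t' M).

Definition ADinf (M : mset) : mset :=
  fun g => exists L, is_length M L /\ ADiter L M g.

Definition stable_ME (mG : mgame) (sigma : profile) : Prop :=
  exists g, ADinf (fun h => h = mG) g /\ NME g sigma /\
            forall v, chi sigma v -> adapt g v = g.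

(* edges of Gamma' (Gamma without self-loops); vertices of Gamma are
   ADstar {mG}, which is closed under adapt_edge *)
Definition edge' (g1 g2 : mgame) : Prop := adapt_edge g1 g2 /\ g1 <> g2.

Definition maximal_path_from (mG : mgame) (p : nat -> mgame) (k : nat) : Prop :=
  p 0%N = mG /\
  (forall i, (i < k)%N -> edge' (p i) (p i.+1)) /\
  (forall i j, (i <= k)%N -> (j <= k)%N -> p i = p j -> i = j) /\
  (forall g, ADstar (fun h => h = mG) g -> edge' (p k) g ->
     exists2 i, (i <= k)%N & g = p i).

End MisinfGames.

From HB Require Import structures.
From mathcomp Require Import all_boot all_order all_algebra.
From mathcomp Require Import zify.
From Stdlib Require Import FunctionalExtensionality Classical Wf_nat Lia.
Set Implicit Arguments. Unset Strict Implicit. Unset Printing Implicit Defensive.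
Import Order.TTheory GRing.Theory Num.Theory.
Local Open Scope ring_scope.

(* Call a position inaccurate in a game when some subjective payoff there differs
   from the actual one.  Adapting at v makes v accurate and keeps accurate
   positions accurate, so along an edge of the adaptation graph the number of
   inaccurate positions never increases, and it strictly decreases unless the
   edge is a self-loop.  Hence every walk from mG longer than this number has a
   self-loop, which can be removed or repeated: AD^(t)({mG}) becomes constant, so
   the length L exists.  If an adaptation of the end p k of a maximal path at a
   position of chi(sigma) changed p k, maximality would make the new game some
   p i, although it has fewer inaccurate positions than every p i.  So p k carries
   a self-loop and lies in AD^(t)({mG}) for every t >= k, hence in AD^(L)({mG}). *)

Definition walk (T : Type) (e : T -> T -> Prop) (w : nat -> T) (t : nat) : Prop :=
  forall i, (i < t)%N -> e (w i) (w i.+1).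

Lemma exists_least_nat (P : nat -> Prop) t :
  P t -> exists L, P L /\ forall t', (t' < L)%N -> ~ P t'.
Proof.
move=> Pt.
have [L [[PL leastL] _]] :=
  dec_inh_nat_subset_has_unique_least_element P (fun t => classic (P t)) (ex_intro _ t Pt).
by exists L; split=> // t' lt_t'L /leastL; lia.
Qed.

Section AdaptationGraph.
Variables (R : realFieldType) (n : nat) (m : 'I_n -> nat).
Implicit Types (g h : mgame R m) (v s : position m) (M : mset R m).

Definition accurate_at g s : bool :=
  [forall j, forall i, subj g j s i == actual g s i].

Definition inaccurate g : {set position m} := [set s | ~~ accurate_at g s].

Lemma accurate_at_adapt g v s : accurate_at g s -> accurate_at (adapt g v) s.
Proof.
move=> /forallP acc; apply/forallP => j; apply/forallP => i /=.
by case: (s =P v) => [->|_]; [rewrite eqxx | exact: (forallP (acc j))].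
Qed.

Lemma accurate_at_adapt_self g v : accurate_at (adapt g v) v.
Proof. by apply/forallP => j; apply/forallP => i /=; rewrite eqxx. Qed.

Lemma adapt_accurate g v : accurate_at g v -> adapt g v = g.
Proof.
case: g => P0 P /forallP /= acc; congr MGame.
apply: functional_extensionality => j; apply: functional_extensionality => s.
case: eqP => [->|//]; apply: functional_extensionality => i.
exact/esym/eqP/(forallP (acc j)).
Qed.

Lemma inaccurate_adapt_proper g v :
  adapt g v <> g -> inaccurate (adapt g v) \proper inaccurate g.
Proof.
move=> moved; apply/properP; split.
  by apply/subsetP => s; rewrite !inE; apply: contra; apply: accurate_at_adapt.
exists v; rewrite !inE ?accurate_at_adapt_self //.
by apply: contra_notN moved => /adapt_accurate.
Qed.

Lemma card_inaccurate_edge' g h : edge' g h -> (#|inaccurate h| < #|inaccurate g|)%N.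
Proof.
by move=> [[sigma [v [_ [_ ->]]]] moved]; apply/proper_card/inaccurate_adapt_proper/nesym.
Qed.

Lemma card_inaccurate_walk' w t i j : walk (@edge' R n m) w t ->
  (i <= j)%N -> (j <= t)%N -> (#|inaccurate (w j)| + (j - i) <= #|inaccurate (w i)|)%N.
Proof.
move=> ww; elim: j => [|j IH] le_ij le_jt.
  by rewrite leqn0 in le_ij; rewrite (eqP le_ij) addn0.
have [->|ne_ij] := eqVneq i j.+1; first by rewrite subnn addn0.
have le_ij' : (i <= j)%N by move: le_ij; rewrite leq_eqVlt (negbTE ne_ij).
have := IH le_ij' (ltnW le_jt); have := card_inaccurate_edge' (ww j le_jt); lia.
Qed.

Lemma walk_has_loop w t : walk (@adapt_edge R n m) w t ->
  (#|inaccurate (w 0%N)| < t)%N -> exists2 i, (i < t)%N & w i = w i.+1.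
Proof.
move=> ww long; apply: NNPP => no_loop.
have ww' : walk (@edge' R n m) w t.
  by move=> i lt_it; split; [exact: ww | move=> e; apply: no_loop; exists i].
have := card_inaccurate_walk' ww' (leq0n t) (leqnn t); lia.
Qed.

Lemma walk_skip_loop w t i : walk (@adapt_edge R n m) w t.+1 ->
  (i <= t)%N -> w i = w i.+1 ->
  exists w', [/\ w' 0%N = w 0%N, walk (@adapt_edge R n m) w' t & w' t = w t.+1].
Proof.
move=> ww le_it loop; exists (fun j => w (if (j <= i)%N then j else j.+1)); split=> //=.
  move=> j; case: (ltngtP j i) => [lt_ji|lt_ij|->] lt_jt.
  - by apply: ww; lia.
  - by apply: ww; lia.
  - by rewrite loop; apply: ww.
by case: ifP => // le_ti; have -> : t = i by lia.
Qed.

Lemma walk_insert_loop w t i : walk (@adapt_edge R n m) w t ->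
  (i <= t)%N -> adapt_edge (w i) (w i) ->
  exists w', [/\ w' 0%N = w 0%N, walk (@adapt_edge R n m) w' t.+1 & w' t.+1 = w t].
Proof.
move=> ww le_it loop; exists (fun j => w (if (j <= i)%N then j else j.-1)).
split=> /=; [by [] | | by rewrite ltnNge le_it].
move=> j; case: (ltngtP j i) => [lt_ji|lt_ij|->] lt_jt.
- by apply: ww; lia.
- by rewrite -{2}(prednK (leq_ltn_trans _ lt_ij)) //; apply: ww; lia.
- exact: loop.
Qed.

Lemma ADiter_S t M : ADiter t.+1 M = AD (ADiter t M).
Proof. by elim: t M => [|t IH] M //=; rewrite -IH. Qed.

Lemma ADiterP t M g :
  ADiter t M g <-> exists w, [/\ M (w 0%N), walk (@adapt_edge R n m) w t & w t = g].
Proof.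
elim: t M g => [|t IH] M g /=.
  by split=> [Mg | [w [Mw0 _ <-]]] //; exists (fun=> g).
rewrite IH; split=> [[w [[g0 [Mg0 e0]] ww <-]] | [w [Mw0 ww <-]]].
  exists (fun i => if i is i'.+1 then w i' else g0); split=> //.
  by case=> [|i] lt_it //; apply: ww.
exists (fun i => w i.+1); split=> //; first by exists (w 0%N); split=> //; apply: ww.
by move=> i lt_it; apply: ww.
Qed.

Lemma ADiter_stable M t : (forall g, M g -> #|inaccurate g| < t)%N ->
  mset_eq (ADiter t.+1 M) (ADiter t M).
Proof.
move=> small g; rewrite !ADiterP; split=> -[w [Mw0 ww <-]].
  have [i lt_it loop] := walk_has_loop ww (ltnW (small _ Mw0)).
  have [w' [w'0 ww' w't]] := walk_skip_loop ww lt_it loop.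
  by exists w'; rewrite w'0 w't.
have [i lt_it loop] := walk_has_loop ww (small _ Mw0).
have loop_i : adapt_edge (w i) (w i) by rewrite {2}loop; apply: ww.
have [w' [w'0 ww' w't]] := walk_insert_loop ww (ltnW lt_it) loop_i.
by exists w'; rewrite w'0 w't.
Qed.

Lemma is_length_exists M t : (forall g, M g -> #|inaccurate g| < t)%N ->
  exists L, is_length M L.
Proof.
move=> small.
exact: (@exists_least_nat (fun t => mset_eq (ADiter t.+1 M) (ADiter t M)) _ (ADiter_stable small)).
Qed.

Lemma AD_mset_eq M1 M2 : mset_eq M1 M2 -> mset_eq (AD M1) (AD M2).
Proof. by move=> eqM g; split=> -[g0 [Mg0 e0]]; exists g0; split=> //; apply/eqM. Qed.

Lemma ADiter_after_length M L j : is_length M L ->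
  mset_eq (ADiter (L + j) M) (ADiter L M).
Proof.
move=> [stable _]; elim: j => [|j IH] g; first by rewrite addn0.
by rewrite addnS ADiter_S (AD_mset_eq IH) -ADiter_S; apply: stable.
Qed.

Lemma ADiter_self_loop M t g j : ADiter t M g -> adapt_edge g g -> ADiter (t + j) M g.
Proof.
move=> Mg loop; elim: j => [|j IH]; first by rewrite addn0.
by rewrite addnS ADiter_S; exists g.
Qed.

Lemma mixed_support i (x : 'I_(m i) -> R) : mixed x -> exists a, 0 < x a.
Proof.
move=> [x_ge0 sum_x1]; apply/existsP/contraT; rewrite negb_exists => /forallP x_le0.
have : \sum_(a < m i) x a = 0.
  by apply: big1 => a _; apply/eqP; rewrite eq_le x_ge0 andbT leNgt x_le0.
by rewrite sum_x1 => /eqP; rewrite oner_eq0.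
Qed.

Lemma NME_chi g sigma : NME g sigma -> exists v, chi sigma v.
Proof.
move=> NMEs; have /fin_all_exists [u u_pos] : forall i, exists a, 0 < sigma i a.
  by move=> i; have [tau [[mixed_tau _] <-]] := NMEs i; apply: mixed_support.
by exists [ffun i => u i] => i; rewrite ffunE.
Qed.

Lemma maximal_path_end_fixed mG (p : nat -> mgame R m) k sigma v :
  maximal_path_from mG p k ->
  NME (p k) sigma -> chi sigma v -> adapt (p k) v = p k.
Proof.
move=> [p0 [path [_ maximal]]] NMEs chiv; apply: NNPP => moved.
have edge_k : edge' (p k) (adapt (p k) v) by split; [exists sigma, v | apply: nesym].
have reach : ADstar (fun h => h = mG) (adapt (p k) v).
  exists k.+1; rewrite ADiter_S; exists (p k); split; last by exists sigma, v.
  by apply/ADiterP; exists p; split=> // i /path [].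
have [i le_ik pi] := maximal _ reach edge_k.
have := card_inaccurate_edge' edge_k; rewrite pi.
have := card_inaccurate_walk' path le_ik (leqnn k); lia.
Qed.

End AdaptationGraph.

Theorem corollary3 (R : realFieldType) (n : nat) (m : 'I_n -> nat)
    (Hequal : forall i j : 'I_n, m i = m j)
    (mG : mgame R m) (p : nat -> mgame R m) (k : nat) :
  maximal_path_from mG p k ->
  forall sigma : profile R m, NME (p k) sigma -> stable_ME mG sigma.
Proof.
move=> maxp sigma NMEs; have [p0 [path _]] := maxp.
have fixed := maximal_path_end_fixed maxp NMEs.
have [v chiv] := NME_chi NMEs.
have loop : adapt_edge (p k) (p k) by exists sigma, v; rewrite fixed.
have reach_k : ADiter k (fun h => h = mG) (p k).
  by apply/ADiterP; exists p; split=> // i /path [].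
have [L lenL] : exists L, is_length (fun h => h = mG) L.
  by apply: (is_length_exists (t := #|inaccurate mG|.+1)) => g ->.
exists (p k); split=> //; exists L; split=> //.
by apply/(ADiter_after_length k lenL); rewrite addnC; apply: ADiter_self_loop.
Qed.
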